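(* Let $\Omega$ be a triangulation of a planar domain whose vertex set $V$ is in general position. Label the edges of $\Omega$ as terminal-edges, internal-edges and frontier-edges (with boundary edges counted as frontier-edges). Then every vertex $v \in V$ is an endpoint of at least one frontier-edge or barrier-edge. Equivalently, there is no vertex of $\Omega$ all of whose incident edges are internal-edges, i.e. there are no isolated interior points of terminal-edge regions.
   Context: Let $\Omega$ be a triangulation of a planar domain. Here ''general position'' is taken to mean that the three edges of every triangle of $\Omega$ have pairwise distinct lengths, so every triangle has a unique longest edge. For an edge $e$ of $\Omega$, the labels are as follows. - If $e$ is shared by two triangles $t_1,t_2$: - $e$ is a terminal-edge if it is the longest edge of both $t_1$ and $t_2$; - $e$ is a frontier-edge if it is the longest edge of neither $t_1$ nor $t_2$; - $e$ is an internal-edge if it is the longest edge of exactly one of $t_1,t_2$. - If $e$ belongs to only one triangle, it is a boundary edge and is treated as a frontier-edge. The Longest-edge propagation path $\mathrm{Lepp}(t_0)$ of a triangle $t_0$ is the sequence $t_0,t_1,\dots,t_l$ in which $t_i$ is the neighbor of $t_{i-1}$ across the longest edge of $t_{i-1}$. The sequence stops when that longest edge is a terminal-edge (or a boundary edge); this edge is the terminal-edge of $\mathrm{Lepp}(t_0)$. A terminal-edge region is the union of all triangles whose Lepp has the same terminal-edge. Terminal-edge regions cover the domain without overlapping. A barrier-edge is a frontier-edge lying in the interior of a terminal-edge region, i.e. both triangles sharing it belong to the same terminal-edge region. *)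

(* A triangulation of a planar domain, modelled as a finite
   vertex type V, an embedding p : V -> R^2 (R a real closed field), and a
   finite set T of triangles, each a 3-element set of vertices. *)
From HB Require Import structures.
From mathcomp Require Import all_boot all_order all_algebra.
Set Implicit Arguments. Unset Strict Implicit. Unset Printing Implicit Defensive.
Import Order.TTheory GRing.Theory Num.Theory.
Local Open Scope ring_scope.

Definition dist (R : rcfType) (x y : R * R) : R :=
  Num.sqrt ((x.1 - y.1) ^+ 2 + (x.2 - y.2) ^+ 2).

Definition det3 (R : rcfType) (a b c : R * R) : R :=
  (b.1 - a.1) * (c.2 - a.2) - (b.2 - a.2) * (c.1 - a.1).

Definition in_closed_tri (R : rcfType) (x a b c : R * R) : Prop :=
  exists l1 l2 l3 : R, [/\ 0 <= l1, 0 <= l2, 0 <= l3, l1 + l2 + l3 = 1 &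
    x = (l1 * a.1 + l2 * b.1 + l3 * c.1, l1 * a.2 + l2 * b.2 + l3 * c.2)].

Definition in_open_tri (R : rcfType) (x a b c : R * R) : Prop :=
  exists l1 l2 l3 : R, [/\ 0 < l1, 0 < l2, 0 < l3, l1 + l2 + l3 = 1 &
    x = (l1 * a.1 + l2 * b.1 + l3 * c.1, l1 * a.2 + l2 * b.2 + l3 * c.2)].

Definition is_tri_on (V : finType) (t : {set V}) (a b c : V) : Prop :=
  [/\ a != b, a != c, b != c & t = [set a; b; c]].

Definition tris (V : finType) (T : {set {set V}}) (e : {set V}) : {set {set V}} :=
  [set t in T | e \subset t].

Definition is_edge (V : finType) (T : {set {set V}}) (e : {set V}) : Prop :=
  #|e| = 2%N /\ exists2 t, t \in T & e \subset t.

(* Geometric triangulation of a planar domain (the union of its triangles):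
   nondegenerate triangles with pairwise disjoint interiors, conforming
   (no vertex lies on a triangle except at its corners), every edge in at
   most two triangles, and V is exactly the set of vertices. *)
Definition triangulation (R : rcfType) (V : finType) (p : V -> R * R)
    (T : {set {set V}}) : Prop :=
  [/\ injective p,
      (forall t, t \in T -> exists a b c,
          is_tri_on t a b c /\ det3 (p a) (p b) (p c) != 0),
      (forall v : V, exists2 t, t \in T & v \in t),
      (forall e : {set V}, #|e| = 2%N -> (#|tris T e| <= 2)%N) &
      ((forall t1 t2 a b c a' b' c', t1 \in T -> t2 \in T -> t1 != t2 ->
          is_tri_on t1 a b c -> is_tri_on t2 a' b' c' ->
          ~ exists x, in_open_tri x (p a) (p b) (p c) /\
                      in_open_tri x (p a') (p b') (p c'))
       /\ (forall t a b c v, t \in T -> is_tri_on t a b c ->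
          in_closed_tri (p v) (p a) (p b) (p c) -> v \in t))].

(* general position: the three edges of every triangle have pairwise
   distinct lengths *)
Definition general_position (R : rcfType) (V : finType) (p : V -> R * R)
    (T : {set {set V}}) : Prop :=
  forall t a b c, t \in T -> is_tri_on t a b c ->
    dist (p a) (p b) != dist (p a) (p c).

Definition longest (R : rcfType) (V : finType) (p : V -> R * R)
    (t e : {set V}) : Prop :=
  exists a b c, [/\ is_tri_on t a b c, e = [set a; b],
    dist (p a) (p c) < dist (p a) (p b) & dist (p b) (p c) < dist (p a) (p b)].

Definition shared (V : finType) (T : {set {set V}}) (e t1 t2 : {set V}) : Prop :=
  [/\ #|e| = 2%N, t1 \in T, t2 \in T, t1 != t2 & (e \subset t1) && (e \subset t2)].

Definition boundary_edge (V : finType) (T : {set {set V}}) (e : {set V}) : Prop :=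
  is_edge T e /\ #|tris T e| = 1%N.

Definition terminal_edge (R : rcfType) (V : finType) (p : V -> R * R)
    (T : {set {set V}}) (e : {set V}) : Prop :=
  exists t1 t2, [/\ shared T e t1 t2, longest p t1 e & longest p t2 e].

Definition internal_edge (R : rcfType) (V : finType) (p : V -> R * R)
    (T : {set {set V}}) (e : {set V}) : Prop :=
  exists t1 t2, [/\ shared T e t1 t2, longest p t1 e & ~ longest p t2 e].

Definition frontier_edge (R : rcfType) (V : finType) (p : V -> R * R)
    (T : {set {set V}}) (e : {set V}) : Prop :=
  boundary_edge T e \/
  exists t1 t2, [/\ shared T e t1 t2, ~ longest p t1 e & ~ longest p t2 e].

(* lepp_terminal p T t e : e is the terminal-edge of Lepp(t) *)
Inductive lepp_terminal (R : rcfType) (V : finType) (p : V -> R * R)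
    (T : {set {set V}}) : {set V} -> {set V} -> Prop :=
| lepp_stop t e : longest p t e ->
    terminal_edge p T e \/ boundary_edge T e -> lepp_terminal p T t e
| lepp_step t u e' e : longest p t e' ->
    ~ terminal_edge p T e' -> ~ boundary_edge T e' ->
    u \in T -> u != t -> e' \subset u ->
    lepp_terminal p T u e -> lepp_terminal p T t e.

Definition same_region (R : rcfType) (V : finType) (p : V -> R * R)
    (T : {set {set V}}) (t1 t2 : {set V}) : Prop :=
  exists e, lepp_terminal p T t1 e /\ lepp_terminal p T t2 e.

Definition barrier_edge (R : rcfType) (V : finType) (p : V -> R * R)
    (T : {set {set V}}) (e : {set V}) : Prop :=
  frontier_edge p T e /\
  exists t1 t2, shared T e t1 t2 /\ same_region p T t1 t2.

(* Let w be a vertex adjacent to v that is nearest to v.  If the edge vw were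
   the longest edge of some triangle vwz, then z would be adjacent to v and
   strictly nearer to v than w.  So vw is the longest edge of none of its (at
   most two) triangles: it is a frontier-edge. *)
From mathcomp Require Import all_boot all_order all_algebra.
Set Implicit Arguments. Unset Strict Implicit. Unset Printing Implicit Defensive.
Import Order.TTheory GRing.Theory Num.Theory.
Local Open Scope ring_scope.

Lemma dist_sym (R : rcfType) (x y : R * R) : dist x y = dist y x.
Proof. by rewrite /dist -(sqrrN (x.1 - y.1)) -(sqrrN (x.2 - y.2)) !opprB. Qed.

Definition adjacent (V : finType) (T : {set {set V}}) (v w : V) : bool :=
  (w != v) && [exists t in T, (v \in t) && (w \in t)].

Section NearestNeighbour.

Variables (R : rcfType) (V : finType) (p : V -> R * R) (T : {set {set V}}).

Lemma adjacent_exists v :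
  (forall t, t \in T -> exists a b c, is_tri_on t a b c) ->
  (exists2 t, t \in T & v \in t) -> exists w, adjacent T v w.
Proof.
move=> tri_on [t tT vt]; have [a [b [c [ab ac bc def_t]]]] := tri_on t tT.
have adj x y : x \in t -> y \in t -> y != x -> adjacent T x y.
  by move=> xt yt yx; rewrite /adjacent yx; apply/existsP; exists t; rewrite tT xt.
have [a_t b_t] : a \in t /\ b \in t by rewrite def_t !inE !eqxx ?orbT.
have [-> | va] := eqVneq v a; first by exists b; rewrite adj // eq_sym.
by exists a; rewrite adj // eq_sym.
Qed.

Lemma longest_dist_lt t x y : x != y -> longest p t [set x; y] ->
  exists z, [/\ x \in t, z \in t, z != x & dist (p x) (p z) < dist (p x) (p y)].
Proof.
move=> xy [a [b [c [[ab ac bc def_t] def_e ac_lt bc_lt]]]].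
have [at' bt ct] : [/\ a \in t, b \in t & c \in t] by rewrite def_t !inE !eqxx ?orbT.
have [[-> ->] | [-> ->]] : (x = a /\ y = b) \/ (x = b /\ y = a).
- move/setP: def_e => def_e; have := def_e x; have := def_e y.
  rewrite !inE !eqxx /= orbT => /esym ya /esym xa.
  by case/orP: xa => /eqP xa; case/orP: ya => /eqP ya; subst; rewrite ?eqxx in xy; auto.
- by exists c; rewrite at' ct eq_sym ac.
- by exists c; rewrite bt ct eq_sym bc [dist (p b) (p a)]dist_sym.
Qed.

Lemma nearest_edge_not_longest v w t :
  adjacent T v w ->
  (forall u, adjacent T v u -> dist (p v) (p w) <= dist (p v) (p u)) ->
  t \in T -> ~ longest p t [set v; w].
Proof.
move=> /andP[wv _] nearest tT; rewrite eq_sym in wv.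
case/(longest_dist_lt wv) => z [vt zt zv lt_zw].
have adj_z : adjacent T v z.
  by rewrite /adjacent zv; apply/existsP; exists t; rewrite tT vt.
by have := le_lt_trans (nearest z adj_z) lt_zw; rewrite ltxx.
Qed.

Lemma frontier_edge_never_longest (e t0 : {set V}) :
  #|e| = 2 -> t0 \in T -> e \subset t0 -> (#|tris T e| <= 2)%N ->
  (forall t, t \in T -> e \subset t -> ~ longest p t e) -> frontier_edge p T e.
Proof.
move=> card_e t0T e_t0 le2 never_longest.
have t0_tris : t0 \in tris T e by rewrite inE t0T.
have /orP[/eqP one | two] : (#|tris T e| == 1) || (#|tris T e| == 2).
  have : (0 < #|tris T e|)%N by apply/card_gt0P; exists t0.
  by case: #|tris T e| le2 => [|[|[]]].
- by left; split=> //; split=> //; exists t0.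
- case/cards2P: two => t1 [t2 [t12 def_tris]].
  have : t1 \in tris T e by rewrite def_tris !inE eqxx.
  have : t2 \in tris T e by rewrite def_tris !inE eqxx orbT.
  rewrite !inE => /andP[t2T e_t2] /andP[t1T e_t1].
  by right; exists t1, t2; split; [split; rewrite ?e_t1 | exact: never_longest ..].
Qed.

End NearestNeighbour.

Theorem theorem1 (R : rcfType) (V : finType) (p : V -> R * R)
    (T : {set {set V}}) :
  triangulation p T -> general_position p T ->
  forall v : V, exists e : {set V},
    v \in e /\ (frontier_edge p T e \/ barrier_edge p T e).
Proof.
move=> [_ tri_det covered le2 _] _ v.
have tri_on t : t \in T -> exists a b c, is_tri_on t a b c.
  by case/tri_det => a [b [c [? _]]]; exists a, b, c.
have [w0 adj0] := adjacent_exists tri_on (covered v).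
case: (arg_minP (fun u => dist (p v) (p u)) adj0) => w adj_w nearest.
have /andP[wv /existsP[t0 /and3P[t0T vt0 wt0]]] := adj_w.
have card_vw : #|[set v; w]| = 2 by rewrite cards2 eq_sym wv.
exists [set v; w]; split; first by rewrite !inE eqxx.
left; apply: (frontier_edge_never_longest card_vw t0T _ (le2 _ card_vw)).
- by apply/subsetP => x; rewrite !inE => /orP[] /eqP ->.
- by move=> t tT _; apply: (nearest_edge_not_longest (T := T)) => // u /nearest.
Qed.
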